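(* Let $n\ge1$. Then $\gamma_e(P_n)=\lceil (n+1)/2\rceil$ (i.e., $P_n$ admits an extended irregular dominating set with exactly $\lceil (n+1)/2\rceil$ vertices) if and only if $n\in\{1,6,10\}$.
   Context: $P_n$ is the path on $n$ vertices $[x_1,\dots,x_n]$ with edges $\{x_i,x_{i+1}\}$. In a finite simple graph $\Gamma=(V,E)$ with distance $d$, a vertex $v$ carrying a non-negative integer label $\ell$ dominates (covers) exactly the vertices $u$ with $d(u,v)=\ell$; a vertex labeled $0$ dominates only itself. An extended irregular dominating set is a set $S\subseteq V$ with a labeling $\lambda:S\to\mathbb{Z}_{\ge0}$ with distinct labels on distinct vertices, such that every vertex of $V$ is dominated by some vertex of $S$; some vertex of $S$ has label $0$ (for a single vertex, the vertex labeled $0$ suffices). $\gamma_e(\Gamma)$ denotes the minimum cardinality of an extended irregular dominating set of $\Gamma$; every extended irregular dominating set of $P_n$ has at least $\lceil (n+1)/2\rceil$ vertices. *)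

From mathcomp Require Import all_boot.
Set Implicit Arguments. Unset Strict Implicit. Unset Printing Implicit Defensive.

(* The path P_n on vertices 'I_n (vertex x_{i+1} is the ordinal i), edges {i, i+1}.
   Its graph distance is d(i, j) = |i - j|. *)
Definition path_dist (n : nat) (u v : 'I_n) : nat := maxn (u - v) (v - u).

Definition dominates (n : nat) (lab : 'I_n -> nat) (v u : 'I_n) : bool :=
  path_dist u v == lab v.

Definition ext_irr_dom (n : nat) (S : {set 'I_n}) (lab : 'I_n -> nat) : Prop :=
  {in S &, injective lab} /\
  (exists2 v, v \in S & lab v = 0) /\
  (forall u : 'I_n, exists2 v, v \in S & dominates lab v u).

Definition gamma_e_eq (n k : nat) : Prop :=
  (exists S lab, @ext_irr_dom n S lab /\ #|S| = k) /\
  (forall S lab, @ext_irr_dom n S lab -> k <= #|S|).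

From mathcomp Require Import all_boot zify.
Set Implicit Arguments. Unset Strict Implicit. Unset Printing Implicit Defensive.

(* A vertex with label l > 0 dominates at most the two vertices at distance l, and
   dominates two only if 2l < n; the vertex labelled 0 dominates only itself.  Double
   counting gives n <= |S| + |T|, where T is the set of vertices dominating two vertices,
   and |T| <= (n - 1)/2 since their labels are distinct elements of [1, (n - 1)/2]; this
   is the lower bound.  If |S| = n - h with h = (n - 1)/2, every vertex is dominated
   exactly once and the labels 1..h sit at centres c_1..c_h whose ends c_l - l, c_l + l
   together with the vertex labelled 0 (and, for even n, one vertex p dominated by a
   vertex w of label |p - w| > h) partition the path.  For odd n the centres of labels h
   and h - 1 do not fit unless n = 1.  For n = 2m, the second moments of both sides of
   the partition about the midpoint of the path agree; since the c_l are distinct this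
   forces m <= 8, and an exhaustive search of the cases n <= 16 leaves n = 6 and 10. *)

(* [cs] lists the centres of the labels b, b + 1, ... *)
Fixpoint ends b (cs : seq nat) : seq nat :=
  if cs is c :: cs' then c - b :: c + b :: ends b.+1 cs' else [::].

Fixpoint packing n b (cs : seq nat) : bool :=
  if cs is c :: cs' then
    [&& b <= c, c + b < n, c \notin cs', c - b \notin ends b.+1 cs'
      & c + b \notin ends b.+1 cs'] && packing n b.+1 cs'
  else true.

Lemma size_ends b cs : size (ends b cs) = (size cs).*2.
Proof. by elim: cs b => [|c cs IH] b //=; rewrite IH. Qed.

Lemma packing_catr n b xs ys : packing n b (xs ++ ys) -> packing n (b + size xs) ys.
Proof.
elim: xs b => [|x xs IH] b /=; first by rewrite addn0.
by case/andP=> _ /IH; rewrite addSnnS.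
Qed.

Lemma packing_uniq n b cs : packing n b cs -> uniq cs.
Proof. by elim: cs b => [|c cs IH] b //= /andP[/and5P[_ _ -> _ _] /IH]. Qed.

Lemma packing_uniq_ends n b cs : 0 < b -> packing n b cs -> uniq (ends b cs).
Proof.
elim: cs b => [|c cs IH] b //= b_gt0 /andP[/and5P[b_le_c _ _ cb_out cb'_out] /IH->] //.
by rewrite inE negb_or cb_out cb'_out !andbT; apply/eqP; lia.
Qed.

Lemma packing_ends_lt n b cs x : packing n b cs -> x \in ends b cs -> x < n.
Proof.
elim: cs b => [|c cs IH] b //= /andP[/and5P[_ cb_lt _ _ _] /IH {}IH].
by rewrite !inE => /or3P[/eqP->|/eqP->|/IH]; first lia.
Qed.

Lemma mem_ends_iota b k (f : nat -> nat) x :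
  (x \in ends b (map f (iota b k))) = has (fun l => x \in [:: f l - l; f l + l]) (iota b k).
Proof. by elim: k b => [|k IH] b //=; rewrite -IH !inE orbA. Qed.

Lemma packing_iota n b k (f : nat -> nat) :
  {in iota b k, forall l, (l <= f l) && (f l + l < n)} ->
  {in iota b k &, injective f} ->
  {in iota b k &, forall l l' x,
     x \in [:: f l - l; f l + l] -> x \in [:: f l' - l'; f l' + l'] -> l = l'} ->
  packing n b (map f (iota b k)).
Proof.
elim: k b => [|k IH] b //= fits f_inj ends_disj.
have b_in : b \in iota b k.+1 by rewrite mem_iota; lia.
have sub l : l \in iota b.+1 k -> l \in iota b k.+1 by rewrite !mem_iota; lia.
have b_notin : b \notin iota b.+1 k by rewrite mem_iota ltnn.
have disj_b x l : x \in [:: f b - b; f b + b] -> l \in iota b.+1 k ->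
    x \notin [:: f l - l; f l + l].
  move=> x_b l_in; apply: (contraNN _ b_notin) => x_l.
  by rewrite {1}(ends_disj b l b_in (sub _ l_in) x x_b x_l).
have /andP[-> ->] /= := fits b b_in; rewrite !mem_ends_iota.
apply/andP; split.
  apply/and3P; split.
  - apply: (contraNN _ b_notin) => /mapP[l l_in /(f_inj _ _ b_in (sub _ l_in)) b_l].
    by rewrite {1}b_l.
  - by apply/hasPn => l; apply: disj_b; rewrite !inE eqxx.
  - by apply/hasPn => l; apply: disj_b; rewrite !inE eqxx orbT.
apply: IH => [l l_in|l l' l_in l'_in|l l' l_in l'_in]; first exact: fits (sub _ l_in).
  exact: f_inj (sub _ l_in) (sub _ l'_in).
exact: ends_disj (sub _ l_in) (sub _ l'_in).
Qed.

Lemma one_hole_packing_eq0 h cs x0 :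
  packing h.*2.+1 1 cs -> size cs = h -> x0 < h.*2.+1 ->
  x0 \notin cs -> x0 \notin ends 1 cs -> h = 0.
Proof.
case/lastP: cs => [|cs b]; first by move=> _ <-.
case/lastP: cs => [|cs a].
  move=> /= /andP[/and3P[b_ge1 b_lt _] _] h1; subst h.
  by rewrite !inE => x0_lt x0_b /norP[x0_lo x0_hi]; lia.
rewrite -!cats1 -catA size_cat /= addn2 => /packing_catr pk size_cs _ _ _.
move: pk; rewrite -size_cs add1n /= !inE.
(* The centre of label h must be h, and then no place is left for label h - 1. *)
case/and3P=> /and5P[a_ge a_lt a_b /norP[a_lo_lo a_lo_hi] /norP[a_hi_lo a_hi_hi]].
by case/and3P=> b_ge b_lt _ _; lia.
Qed.

(* [odd_dist m x = |2x + 1 - 2m|], twice the distance from x to the midpoint m - 1/2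
   of the path on 2m vertices. *)
Definition odd_dist m x := if m <= x then 2 * (x - m) + 1 else 2 * (m - x.+1) + 1.

(* |a - b|^2 + 2ab = a^2 + b^2 with a = 2x + 1 and b = 2m. *)
Lemma odd_dist_sq m x : odd_dist m x ^ 2 + 4 * m * (2 * x + 1) = (2 * x + 1) ^ 2 + 4 * m ^ 2.
Proof.
rewrite /odd_dist; case: leqP => [/subnK <-|/subnK <-]; rewrite ?addnK ?addSnnS ?addnK; nia.
Qed.

Lemma odd_dist_gt0 m x : 0 < odd_dist m x.
Proof. by rewrite /odd_dist; case: (leqP m x); rewrite addn1. Qed.

Lemma odd_dist_parallelogram m c l : l <= c ->
  odd_dist m (c - l) ^ 2 + odd_dist m (c + l) ^ 2 = 2 * odd_dist m c ^ 2 + 8 * l ^ 2.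
Proof.
move/subnK=> <-; rewrite addnK.
have := odd_dist_sq m (c - l); have := odd_dist_sq m (c - l + l + l).
have := odd_dist_sq m (c - l + l); nia.
Qed.

Lemma sum_odd_dist_sq_ends n m b cs : packing n b cs ->
  \sum_(x <- ends b cs) odd_dist m x ^ 2 =
  2 * \sum_(c <- cs) odd_dist m c ^ 2 + 8 * \sum_(l <- iota b (size cs)) l ^ 2.
Proof.
elim: cs b => [|c cs IH] b /=; first by rewrite !big_nil.
case/andP=> /and5P[b_le_c _ _ _ _] /IH {}IH.
rewrite !big_cons IH.
have := odd_dist_parallelogram m b_le_c; lia.
Qed.

Lemma sum_iotaSr (F : nat -> nat) a k :
  \sum_(i <- iota a k.+1) F i = \sum_(i <- iota a k) F i + F (a + k).
Proof. by rewrite -addn1 iotaD big_cat big_seq1. Qed.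

Lemma sum_odd k : \sum_(i <- iota 0 k) (2 * i + 1) = k ^ 2.
Proof. by elim: k => [|k IH]; rewrite ?big_nil // sum_iotaSr IH; nia. Qed.

Lemma sum_odd_squares k : 3 * \sum_(i <- iota 0 k) (2 * i + 1) ^ 2 + k = 4 * k ^ 3.
Proof. by elim: k => [|k IH]; rewrite ?big_nil // sum_iotaSr; nia. Qed.

Lemma sum_squares k : 6 * \sum_(l <- iota 1 k) l ^ 2 = k * k.+1 * (2 * k + 1).
Proof.
elim: k => [|k IH]; first by rewrite big_nil.
by rewrite sum_iotaSr mulnDr IH; nia.
Qed.

Lemma sum_odd_dist_sq_iota m :
  3 * \sum_(x <- iota 0 (2 * m)) odd_dist m x ^ 2 + 2 * m = 8 * m ^ 3.
Proof.
have E : \sum_(x <- iota 0 (2 * m)) (odd_dist m x ^ 2 + 4 * m * (2 * x + 1)) =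
         \sum_(x <- iota 0 (2 * m)) ((2 * x + 1) ^ 2 + 4 * m ^ 2).
  by apply: eq_bigr => x _; rewrite odd_dist_sq.
rewrite [LHS]big_split [RHS]big_split /= -big_distrr /= sum_odd in E.
rewrite big_const_seq count_predT size_iota iter_addn_0 in E.
have := sum_odd_squares (2 * m); nia.
Qed.

Lemma sum_iota_le_sum_uniq (F : nat -> nat) s : {homo F : x y / x <= y} -> uniq s ->
  \sum_(i <- iota 0 (size s)) F i <= \sum_(x <- s) F x.
Proof.
move=> F_mono; move sz : (size s) => k; elim: k s sz => [|k IH] s sz s_uniq.
  by rewrite big_nil.
have [x x_in k_le_x] : exists2 x, x \in s & k <= x.
  apply/hasP; apply: contraT; rewrite -all_predC => /allP s_small.
  have : {subset s <= iota 0 k} by move=> y /s_small; rewrite /= mem_iota -ltnNge.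
  by move/(uniq_leq_size s_uniq); rewrite size_iota sz ltnn.
rewrite (perm_big _ (perm_to_rem x_in)) big_cons sum_iotaSr addnC leq_add ?F_mono //.
by apply: IH; rewrite ?rem_uniq // size_rem // sz.
Qed.

Lemma cube_add_le a b : (a + b) ^ 3 <= 4 * (a ^ 3 + b ^ 3).
Proof.
wlog a_le_b : a b / a <= b => [wlog_ab|].
  by case: (leqP a b) => [|/ltnW] /wlog_ab; rewrite // addnC [a ^ 3 + _]addnC.
by move/subnK: a_le_b => <-; nia.
Qed.

Lemma sum_odd_dist_sq_uniq m cs : uniq cs ->
  size cs ^ 3 <= 3 * \sum_(c <- cs) odd_dist m c ^ 2 + size cs.
Proof.
move=> cs_uniq.
(* On each side of the midpoint the centres have distinct odd distances to it, so their
   squares add up to at least 1^2 + 3^2 + 5^2 + ... *)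
set hi := [seq c - m | c <- cs & m <= c].
set lo := [seq m - c.+1 | c <- cs & ~~ (m <= c)].
have size_cs : size hi + size lo = size cs by rewrite !size_map !size_filter count_predC.
have hi_uniq : uniq hi.
  by rewrite map_inj_in_uniq ?filter_uniq // => x y; rewrite !mem_filter; lia.
have lo_uniq : uniq lo.
  by rewrite map_inj_in_uniq ?filter_uniq // => x y; rewrite !mem_filter; lia.
have sq_mono : {homo (fun i => (2 * i + 1) ^ 2) : x y / x <= y}.
  by move=> x y x_le_y; rewrite leq_exp2r // leq_add2r leq_mul2l x_le_y orbT.
rewrite -size_cs (bigID (fun c => m <= c)) /=.
have -> : \sum_(c <- cs | m <= c) odd_dist m c ^ 2 = \sum_(i <- hi) (2 * i + 1) ^ 2.
  by rewrite big_map big_filter; apply: eq_bigr => c c_ge; rewrite /odd_dist c_ge.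
have -> : \sum_(c <- cs | ~~ (m <= c)) odd_dist m c ^ 2 = \sum_(i <- lo) (2 * i + 1) ^ 2.
  by rewrite big_map big_filter; apply: eq_bigr => c /negPf c_lt; rewrite /odd_dist c_lt.
have := sum_iota_le_sum_uniq sq_mono hi_uniq; have := sum_iota_le_sum_uniq sq_mono lo_uniq.
have := sum_odd_squares (size hi); have := sum_odd_squares (size lo).
have := cube_add_le (size hi) (size lo).
move: (\sum_(i <- hi) _) (\sum_(i <- lo) _) (\sum_(i <- iota 0 (size hi)) _).
by move: (\sum_(i <- iota 0 (size lo)) _); lia.
Qed.

Lemma two_hole_packing_le m cs x0 p :
  packing (2 * m) 1 cs -> size cs = m.-1 -> x0 < 2 * m -> p < 2 * m -> x0 != p ->
  x0 \notin ends 1 cs -> p \notin ends 1 cs -> m <= 8.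
Proof.
move=> pk size_cs x0_lt p_lt x0_p x0_ends p_ends.
set pts := [:: x0, p & ends 1 cs].
have pts_uniq : uniq pts.
  by rewrite /= inE negb_or x0_p x0_ends p_ends (packing_uniq_ends _ pk).
have pts_sub : {subset pts <= iota 0 (2 * m)}.
  move=> y; rewrite !inE mem_iota => /or3P[/eqP->|/eqP->|/(packing_ends_lt pk)] //.
have pts_size : size (iota 0 (2 * m)) <= size pts by rewrite size_iota /= size_ends size_cs; lia.
have [_ /(uniq_perm pts_uniq (iota_uniq 0 _)) pts_perm] := uniq_min_size pts_uniq pts_sub pts_size.
have := perm_big _ pts_perm (P := xpredT) (F := fun x => odd_dist m x ^ 2) (op := addn) (x := 0).
rewrite !big_cons (sum_odd_dist_sq_ends _ pk) size_cs.
have := sum_odd_dist_sq_iota m; have := sum_squares m.-1.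
have := sum_odd_dist_sq_uniq m (packing_uniq pk); rewrite size_cs.
have := odd_dist_gt0 m x0; have := odd_dist_gt0 m p.
move: (odd_dist m x0) (odd_dist m p) (\sum_(c <- cs) _) (\sum_(l <- iota 1 m.-1) l ^ 2)
  (\sum_(x <- iota 0 (2 * m)) odd_dist m x ^ 2).
clear; case: m => [//|h] /= dx dp X L D dp_gt0 dx_gt0 X_ge L_eq D_eq D_split.
have : 1 <= dx ^ 2 by rewrite expn_gt0 dx_gt0.
have : 1 <= dp ^ 2 by rewrite expn_gt0 dp_gt0.
have : 2 * h ^ 3 <= 12 * h ^ 2 + 20 * h by lia.
nia.
Qed.

(* For n = 2h + 2: x0 is the vertex labelled 0, and p, the one vertex that is neither x0
   nor an end of a centre, is dominated by a vertex w of label |p - w| > h. *)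
Definition tight_completion cs x0 w p :=
  [&& x0 \notin cs, x0 \notin ends 1 cs, w \notin cs, w != x0, p \notin ends 1 cs, p != x0
    & size cs < maxn (p - w) (w - p)].

Definition completable n cs :=
  has (fun x0 => has (fun w => has (tight_completion cs x0 w) (iota 0 n)) (iota 0 n)) (iota 0 n).

(* Search over the centres of labels k, k - 1, ..., 1, added in front of [acc]. *)
Fixpoint no_completable_packing n k acc :=
  if k is k'.+1 then
    all (fun c => if packing n k (c :: acc) then no_completable_packing n k' (c :: acc) else true)
      (iota 0 n)
  else ~~ completable n acc.

Lemma completableW n cs x0 w p : x0 < n -> w < n -> p < n ->
  tight_completion cs x0 w p -> completable n cs.
Proof.
move=> x0_lt w_lt p_lt compl; apply/hasP; exists x0; rewrite ?mem_iota //.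
by apply/hasP; exists w; rewrite ?mem_iota //; apply/hasP; exists p; rewrite ?mem_iota.
Qed.

Lemma no_completable_packingP n k cs acc :
  size cs = k -> packing n 1 (cs ++ acc) -> no_completable_packing n k acc ->
  ~~ completable n (cs ++ acc).
Proof.
elim: k acc cs => [|k IH] acc cs; first by move/size0nil->.
case/lastP: cs => [//|cs c]; rewrite size_rcons cat_rcons => -[size_cs] pk /allP search.
have pk_c : packing n k.+1 (c :: acc) by have := packing_catr pk; rewrite size_cs add1n.
have c_lt : c < n by move: pk_c => /= /andP[/and5P[_ ? _ _ _] _]; lia.
by apply: IH size_cs pk _; move: (search c); rewrite mem_iota pk_c; apply.
Qed.

Lemma no_completable_packing_small h : h < 8 -> h \notin [:: 2; 4] ->
  no_completable_packing h.*2.+2 h [::].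
Proof.
move=> h_lt h_not.
have : all (fun h => no_completable_packing h.*2.+2 h [::]) [:: 0; 1; 3; 5; 6; 7] by vm_compute.
by move/allP; apply; case: h h_lt h_not => [|[|[|[|[|[|[|[|h]]]]]]]].
Qed.

Lemma tight_completion_small h cs x0 w p :
  packing h.*2.+2 1 cs -> size cs = h -> x0 < h.*2.+2 -> w < h.*2.+2 -> p < h.*2.+2 ->
  tight_completion cs x0 w p -> h \in [:: 2; 4].
Proof.
move=> pk size_cs x0_lt w_lt p_lt compl.
have [h_lt|h_ge] := ltnP h 8.
  apply: contraTT isT => h_not.
  have pk_nil : packing h.*2.+2 1 (cs ++ [::]) by rewrite cats0.
  have := no_completable_packingP size_cs pk_nil (no_completable_packing_small h_lt h_not).
  by rewrite cats0 (completableW x0_lt w_lt p_lt compl).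
case/and5P: compl => _ x0_ends _ _ /and3P[p_ends p_x0 _]; rewrite eq_sym in p_x0.
have m_eq : h.*2.+2 = 2 * h.+1 by rewrite -mul2n mulnS.
rewrite m_eq in pk x0_lt p_lt.
by have := two_hole_packing_le pk size_cs x0_lt p_lt p_x0 x0_ends p_ends; lia.
Qed.

Definition dominated n (lab : 'I_n -> nat) (v : 'I_n) : {set 'I_n} := [set u | dominates lab v u].

Lemma mem_dominated n (lab : 'I_n -> nat) v u :
  (u \in dominated lab v) = (u + lab v == v :> nat) || (v + lab v == u :> nat).
Proof.
by rewrite inE /dominates /path_dist; apply/eqP/orP => [|[]/eqP]; lia.
Qed.

Lemma mem_dominated_le n (lab : 'I_n -> nat) v u : lab v <= v ->
  (u \in dominated lab v) = ((u : nat) \in [:: v - lab v; v + lab v]).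
Proof. by move=> lab_le; rewrite mem_dominated !inE; congr orb; apply/eqP/eqP; lia. Qed.

Lemma card_dominated_le2 n (lab : 'I_n -> nat) v : #|dominated lab v| <= 2.
Proof.
rewrite cardE -(size_map (@nat_of_ord n)); apply: (@uniq_leq_size _ _ [:: v - lab v; v + lab v]).
  by rewrite map_inj_uniq ?enum_uniq //; apply: val_inj.
move=> x /mapP[u]; rewrite mem_enum mem_dominated !inE => /orP[]/eqP u_v ->; apply/orP; lia.
Qed.

Lemma dominated_label0 n (lab : 'I_n -> nat) v : lab v = 0 -> dominated lab v = [set v].
Proof.
by move=> lab0; apply/setP => u; rewrite mem_dominated in_set1 lab0 !addn0 (eq_sym (v : nat)) orbb.
Qed.

Lemma card_dominated_gt1 n (lab : 'I_n -> nat) v :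
  1 < #|dominated lab v| -> [/\ 0 < lab v, lab v <= v & v + lab v < n].
Proof.
case/card_gt1P=> x [y [+ + x_y]]; rewrite !mem_dominated.
have x_y' : (x : nat) != y by [].
by have := ltn_ord x; have := ltn_ord y => ? ? /orP[]/eqP x_v /orP[]/eqP y_v; split; lia.
Qed.

Lemma sum_card_rel (T U : finType) (A : {pred T}) (r : T -> U -> bool) :
  \sum_(v in A) #|[set u | r v u]| = \sum_u #|[set v in A | r v u]|.
Proof.
under eq_bigr => v _ do rewrite -sum1dep_card.
by rewrite (exchange_big_dep predT) //=; apply: eq_bigr => u _; rewrite sum1dep_card.
Qed.

Section ExtendedIrregularDomination.

Variables (n : nat) (S : {set 'I_n}) (lab : 'I_n -> nat) (x0 : 'I_n).
Hypotheses (lab_inj : {in S &, injective lab}) (x0_in : x0 \in S) (lab_x0 : lab x0 = 0)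
  (covering : forall u, exists2 v, v \in S & dominates lab v u).

Let T := [set v in S | 1 < #|dominated lab v|].

Lemma two_dominator_in v : v \in T -> v \in S.
Proof. by rewrite inE => /andP[]. Qed.

Lemma sum_card_dominated :
  \sum_(v in S) #|dominated lab v| = \sum_u #|[set v in S | dominates lab v u]|.
Proof. exact: sum_card_rel. Qed.

Lemma sum_card_dominated_ge : n <= \sum_(v in S) #|dominated lab v|.
Proof.
rewrite sum_card_dominated.
apply: (@leq_trans (\sum_(u : 'I_n) 1)); first by rewrite sum1_card card_ord.
apply: leq_sum => u _.
by have [v v_in v_u] := covering u; apply/card_gt0P; exists v; rewrite inE v_in.
Qed.

Lemma sum_card_dominated_le : \sum_(v in S) #|dominated lab v| <= #|S| + #|T|.
Proof.
rewrite -sum1_card -sum1dep_card big_mkcondr -big_split leq_sum // => v _.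
by have := card_dominated_le2 lab v; case: (ltnP 1 #|dominated lab v|).
Qed.

Lemma two_dominator_fits v : v \in T -> [/\ 0 < lab v, lab v <= v & v + lab v < n].
Proof. by rewrite inE => /andP[_ /card_dominated_gt1]. Qed.

Lemma lab_two_dominator v : v \in T -> 0 < lab v <= n.-1 %/ 2.
Proof. by case/two_dominator_fits; lia. Qed.

Lemma uniq_two_dominator_labels : uniq (map lab (enum T)).
Proof.
rewrite map_inj_in_uniq ?enum_uniq // => v w; rewrite !mem_enum !inE.
by move=> /andP[v_in _] /andP[w_in _]; apply: lab_inj.
Qed.

Lemma two_dominator_labels_sub : {subset map lab (enum T) <= iota 1 (n.-1 %/ 2)}.
Proof. by move=> l /mapP[v]; rewrite mem_enum mem_iota => /lab_two_dominator ? ->; lia. Qed.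

Lemma card_two_dominators_le : #|T| <= n.-1 %/ 2.
Proof.
rewrite cardE -(size_map lab) -(size_iota 1 (n.-1 %/ 2)).
exact: uniq_leq_size uniq_two_dominator_labels two_dominator_labels_sub.
Qed.

Lemma ext_irr_dom_card_ge : n.+2 %/ 2 <= #|S|.
Proof.
have := sum_card_dominated_ge; have := sum_card_dominated_le.
have := card_two_dominators_le; have := ltn_ord x0; lia.
Qed.

Variable h : nat.
Hypotheses (S_tight : #|S| + h = n) (n_le : n <= h.*2.+2).

Lemma card_two_dominators : #|T| = h.
Proof.
have := sum_card_dominated_ge; have := sum_card_dominated_le.
have := card_two_dominators_le; lia.
Qed.

Lemma dominator_unique u v v' : v \in S -> v' \in S ->
  u \in dominated lab v -> u \in dominated lab v' -> v = v'.
Proof.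
pose N w := #|[set z in S | dominates lab z w]|.
have N_gt0 w : 0 < N w.
  by have [z z_in z_w] := covering w; apply/card_gt0P; exists z; rewrite inE z_in.
have : N u <= 1.
  rewrite leqNgt; apply/negP => N_gt1.
  have : \sum_(w : 'I_n) 1 < \sum_w N w.
    rewrite [X in _ < X](bigD1 u) // [X in X < _](bigD1 u) //= -addSn leq_add //.
    by apply: leq_sum => w _; apply: N_gt0.
  rewrite -sum_card_dominated sum1_card card_ord.
  have := sum_card_dominated_le; have := card_two_dominators; lia.
move=> /card_le1_eqP N_le1 v_in v'_in; rewrite !inE => u_v u_v'.
by apply: N_le1; rewrite inE ?v_in ?v'_in ?u_v ?u_v'.
Qed.

Lemma label_onto l : l \in iota 1 h -> exists2 v, v \in T & lab v = l.
Proof.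
move=> l_in; have sub : {subset map lab (enum T) <= iota 1 h}.
  by move=> l' /two_dominator_labels_sub; rewrite !mem_iota; lia.
have [|_ labels] := uniq_min_size uniq_two_dominator_labels sub.
  by rewrite size_map -cardE card_two_dominators size_iota.
by move: l_in; rewrite -labels => /mapP[v]; rewrite mem_enum => v_T ->; exists v.
Qed.

Definition centre l := odflt x0 [pick v in T | lab v == l].

Lemma centreP l : l \in iota 1 h -> centre l \in T /\ lab (centre l) = l.
Proof.
move=> l_in; rewrite /centre; case: pickP => [v /andP[v_T /eqP]|none] //=.
by have [v v_T v_l] := label_onto l_in; move: (none v); rewrite v_T v_l eqxx.
Qed.

Lemma centre_lab v : v \in T -> centre (lab v) = v.
Proof.
move=> v_T; have [c_T c_lab] : centre (lab v) \in T /\ lab (centre (lab v)) = lab v.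
  by apply: centreP; rewrite mem_iota; have := lab_two_dominator v_T; lia.
exact: lab_inj (two_dominator_in c_T) (two_dominator_in v_T) c_lab.
Qed.

Definition centres := [seq (centre l : nat) | l <- iota 1 h].

Lemma size_centres : size centres = h.
Proof. by rewrite size_map size_iota. Qed.

Lemma mem_centres (v : 'I_n) : ((v : nat) \in centres) = (v \in T).
Proof.
apply/mapP/idP => [[l]|v_T]; last first.
  by exists (lab v); rewrite ?centre_lab // mem_iota; have := lab_two_dominator v_T; lia.
by move=> /centreP[c_T _] /val_inj->.
Qed.


Lemma mem_ends_centres (u : 'I_n) :
  ((u : nat) \in ends 1 centres) = [exists v in T, u \in dominated lab v].
Proof.
rewrite mem_ends_iota; apply/hasP/exists_inP => [[l /centreP[c_T c_lab] u_l]|[v v_T u_v]].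
  have [_ lab_le _] := two_dominator_fits c_T; rewrite c_lab in lab_le.
  by exists (centre l) => //; rewrite mem_dominated_le c_lab //; apply: u_l.
have [_ lab_le _] := two_dominator_fits v_T.
exists (lab v); last by rewrite centre_lab // -mem_dominated_le.
by rewrite mem_iota; have := lab_two_dominator v_T; lia.
Qed.

Lemma packing_centres : packing n 1 centres.
Proof.
have fits l : l \in iota 1 h -> (l <= centre l) && (centre l + l < n).
  by case/centreP=> /two_dominator_fits[_ le lt] c_l; rewrite c_l in le lt; rewrite le lt.
apply: packing_iota => // [l l' /centreP[_ c_l] /centreP[_ c'_l] /val_inj c_c'|].
  by rewrite -c_l -c'_l c_c'.
move=> l l' l_in l'_in x x_l x_l'.
have x_lt : x < n by move: x_l (fits l l_in); rewrite !inE => /orP[]/eqP-> /andP[]; lia.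
have dom_x k : k \in iota 1 h -> x \in [:: centre k - k; centre k + k] ->
    Ordinal x_lt \in dominated lab (centre k).
  by case/centreP=> /two_dominator_fits[_ le _] c_k x_k; rewrite mem_dominated_le // c_k.
have [[c_T c_l] [c'_T c'_l]] := (centreP l_in, centreP l'_in).
have := dominator_unique (two_dominator_in c_T) (two_dominator_in c'_T).
by move=> /(_ _ (dom_x l l_in x_l) (dom_x l' l'_in x_l')) c_c'; rewrite -c_l -c'_l c_c'.
Qed.

Lemma x0_notin_two_dominators : x0 \notin T.
Proof. by rewrite inE dominated_label0 // cards1 andbF. Qed.

Lemma x0_notin_ends : (x0 : nat) \notin ends 1 centres.
Proof.
rewrite mem_ends_centres; apply/exists_inP => -[v v_T x0_v].
have x0_x0 : x0 \in dominated lab x0 by rewrite dominated_label0 // set11.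
have v_x0 := dominator_unique (two_dominator_in v_T) x0_in x0_v x0_x0.
by move: x0_notin_two_dominators; rewrite -v_x0 v_T.
Qed.

Lemma tight_completion_centres :
  h.*2.+1 < n -> exists w p : 'I_n, tight_completion centres x0 w p.
Proof.
move=> n_gt.
have [p p_new] : exists p : 'I_n, (p : nat) \notin (x0 : nat) :: ends 1 centres.
  have : ~~ all (mem ((x0 : nat) :: ends 1 centres)) (iota 0 n).
    apply/negP => /allP/(uniq_leq_size (iota_uniq 0 n)).
    by rewrite size_iota /= size_ends size_centres; lia.
  by case/allPn => p; rewrite mem_iota => /andP[_ p_lt] p_new; exists (Ordinal p_lt).
move: p_new; rewrite inE negb_or => /andP[p_x0 p_ends].
have [w w_in w_p] := covering p.
have w_x0 : w != x0.
  apply: contra p_x0 => /eqP w_x0; have : p \in dominated lab w by rewrite inE.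
  by rewrite w_x0 dominated_label0 // in_set1 => /eqP->.
have w_T : w \notin T.
  apply: contra p_ends => w_T; rewrite mem_ends_centres.
  by apply/exists_inP; exists w; rewrite // inE.
have h_lt : h < lab w.
  rewrite ltnNge; apply: contra w_T => lab_le.
  have lab_gt0 : 0 < lab w.
    by rewrite lt0n; apply: contra w_x0 => /eqP lab0; rewrite (lab_inj w_in x0_in) ?lab0.
  have [c_T c_lab] : centre (lab w) \in T /\ lab (centre (lab w)) = lab w.
    by apply: centreP; rewrite mem_iota; lia.
  by rewrite -(lab_inj (two_dominator_in c_T) w_in c_lab).
exists w, p; rewrite /tight_completion !mem_centres x0_notin_two_dominators x0_notin_ends.
rewrite w_T w_x0 p_ends p_x0 size_centres.
by move: w_p; rewrite /dominates /path_dist => /eqP->.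
Qed.

Lemma tight_odd : n = h.*2.+1 -> h = 0.
Proof.
move=> n_odd; have x0_lt : x0 < h.*2.+1 by rewrite -n_odd.
have := packing_centres; rewrite n_odd => pk.
apply: one_hole_packing_eq0 pk size_centres x0_lt _ x0_notin_ends.
by rewrite mem_centres x0_notin_two_dominators.
Qed.

Lemma tight_even : n = h.*2.+2 -> h \in [:: 2; 4].
Proof.
move=> n_even; have n_gt : h.*2.+1 < n by rewrite n_even.
have [w [p compl]] := tight_completion_centres n_gt.
have [x0_lt w_lt p_lt] : [/\ x0 < h.*2.+2, w < h.*2.+2 & p < h.*2.+2] by rewrite -n_even.
have := packing_centres; rewrite n_even => pk.
exact: tight_completion_small pk size_centres x0_lt w_lt p_lt compl.
Qed.

End ExtendedIrregularDomination.

Lemma ext_irr_dom_card n (S : {set 'I_n}) lab : ext_irr_dom S lab -> n.+2 %/ 2 <= #|S|.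
Proof.
case=> lab_inj [[x0 x0_in lab_x0] covering].
exact: ext_irr_dom_card_ge lab_inj x0_in lab_x0 covering.
Qed.

Definition labelling (vs ls : seq nat) v := nth 0 ls (index v vs).

Lemma gamma_e_eq_labelling n (vs ls : seq nat) : let lb := labelling vs ls in
  all (gtn n) vs -> count (mem vs) (iota 0 n) = n.+2 %/ 2 ->
  all (fun v => all (fun v' => (lb v == lb v') ==> (v == v')) vs) vs ->
  has (fun v => lb v == 0) vs ->
  all (fun u => has (fun v => maxn (u - v) (v - u) == lb v) vs) (iota 0 n) ->
  gamma_e_eq n (n.+2 %/ 2).
Proof.
move=> lb /allP vs_lt card_vs /allP lb_inj /hasP[v0 v0_in /eqP lb_v0] /allP covering.
pose S := [set u : 'I_n | (u : nat) \in vs]; pose lab (u : 'I_n) := lb u.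
have dom : ext_irr_dom S lab.
  split; last split.
  - move=> u u'; rewrite !inE => u_in u'_in lb_eq; apply/val_inj/eqP.
    by move/allP: (lb_inj _ u_in) => /(_ _ u'_in); rewrite [lb u]lb_eq eqxx.
  - by exists (Ordinal (vs_lt _ v0_in)); rewrite ?inE.
  - have u_in (u : 'I_n) : (u : nat) \in iota 0 n by rewrite mem_iota add0n ltn_ord.
    move=> u; have /hasP[v v_in /eqP v_u] := covering u (u_in u).
    by exists (Ordinal (vs_lt _ v_in)); rewrite ?inE // /dominates /path_dist v_u.
split; last by move=> S' lab' /ext_irr_dom_card.
exists S, lab; split=> //.
by rewrite cardsE cardE -(size_map val) -filter_map /= -enumT val_enum_ord size_filter.
Qed.

Lemma gamma_e_eq_1 : gamma_e_eq 1 (3 %/ 2).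
Proof. by apply: (@gamma_e_eq_labelling 1 [:: 0] [:: 0]). Qed.

Lemma gamma_e_eq_6 : gamma_e_eq 6 (8 %/ 2).
Proof. by apply: (@gamma_e_eq_labelling 6 [:: 0; 1; 3; 4] [:: 3; 1; 2; 0]). Qed.

Lemma gamma_e_eq_10 : gamma_e_eq 10 (12 %/ 2).
Proof. by apply: (@gamma_e_eq_labelling 10 [:: 0; 2; 3; 4; 5; 6] [:: 7; 0; 3; 1; 4; 2]). Qed.

Theorem theorem5p7 (n : nat) : 1 <= n ->
  (gamma_e_eq n (n.+2 %/ 2) <-> n \in [:: 1; 6; 10]).
Proof.
move=> n_gt0; split; last first.
  by rewrite !inE => /or3P[]/eqP->; [exact: gamma_e_eq_1|exact: gamma_e_eq_6|exact: gamma_e_eq_10].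
case=> -[S [lab [[lab_inj [[x0 x0_in lab_x0] covering]] card_S]]] _.
have [h n_eq] : exists h, n = h.*2.+1 \/ n = h.*2.+2 by exists (n.-1 %/ 2); lia.
have S_tight : #|S| + h = n by lia.
have n_le : n <= h.*2.+2 by lia.
case: n_eq => n_eq.
  by rewrite n_eq (tight_odd lab_inj x0_in lab_x0 covering S_tight n_le n_eq).
have := tight_even lab_inj x0_in lab_x0 covering S_tight n_le n_eq.
by rewrite n_eq !inE => /orP[]/eqP->.
Qed.
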